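(* Let $\tau=\lfloor \zeta/(w-1)\rfloor+1$. There exists a constant $C>0$ such that for every $\sigma>(1-2^{-w\tau})^{1/\tau}$, every integer $t\ge 0$ and every initial state $s_0\in[-\zeta,\zeta]\cap\mathbb Z$ of the absorbing system, $\mathbb P(H_t)\le C\sigma^t$.
   Context: Fix a positive integer $\zeta$, integers $w_k$ ($k\in\mathbb Z$) and an integer $w>1$ with $w_k\ge w$ for all $k$, and a policy $\pi:\mathbb Z\to\{-1,0,1\}$. On a probability space $(\Omega,\Sigma,\mathbb P)$ let $\eta_t(k)\sim\mathrm{Bin}(w_k,\tfrac12)$ be independent random variables ($t\in\mathbb N\cup\{0\}$, $k\in\mathbb Z$) and set $W_t(k)=2\eta_t(k)-w_k$. The ''absorbing system'' has state space $\{-\zeta,\dots,\zeta\}\cup\{s_*\}$, where $s_*$ is an extra absorbing state: $S_0=s_0\in[-\zeta,\zeta]\cap\mathbb Z$, and $S_{t+1}=S_t+\pi(S_t)+W_t(S_t)$ if $S_t\in[-\zeta,\zeta]$ and $|S_t+\pi(S_t)+W_t(S_t)|\le\zeta$, while $S_{t+1}=s_*$ otherwise. $H_t$ denotes the survival event $\{S_t\ne s_*\}$. *)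

From Stdlib Require Import Reals ZArith List Lia Lra.
Open Scope R_scope.

Definition sumL {A : Type} (l : list A) (f : A -> R) : R :=
  fold_right (fun a acc => f a + acc) 0 l.

Definition Zrange (zeta : nat) : list Z :=
  map (fun k => (Z.of_nat k - Z.of_nat zeta)%Z) (seq 0 (2 * zeta + 1)).

Definition in_box (zeta : nat) (s : Z) : bool :=
  (Z.abs s <=? Z.of_nat zeta)%Z.

(* One-step transition probability P(s + pi(s) + W(s) = s') with
   W(s) = 2 eta - w_s, eta ~ Bin(w_s, 1/2). *)
Definition trans (wk : Z -> nat) (pi : Z -> Z) (s s' : Z) : R :=
  sumL (seq 0 (wk s + 1))
    (fun j => if Z.eqb s' (s + pi s + 2 * Z.of_nat j - Z.of_nat (wk s))%Z
              then Binomial.C (wk s) j / 2 ^ (wk s) else 0).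

(* Law of the absorbing system restricted to the non-absorbed states:
   dist t s = P(S_t = s) for s in [-zeta, zeta]; the mass leaving the box
   goes to the absorbing state s_* and is dropped. *)
Fixpoint dist (zeta : nat) (wk : Z -> nat) (pi : Z -> Z) (s0 : Z)
    (t : nat) (s : Z) : R :=
  match t with
  | O => if Z.eqb s s0 then 1 else 0
  | S t' => if in_box zeta s
            then sumL (Zrange zeta)
                   (fun u => dist zeta wk pi s0 t' u * trans wk pi u s)
            else 0
  end.

(* P(H_t) = P(S_t <> s_* ) *)
Definition survival (zeta : nat) (wk : Z -> nat) (pi : Z -> Z) (s0 : Z)
    (t : nat) : R :=
  sumL (Zrange zeta) (fun s => dist zeta wk pi s0 t s).

(* From every state the chain is absorbed within tau steps with probability at least
   2^(-w tau).  Pick a direction eps with eps (s + pi(s)) >= 0 and let D be the distance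
   from s + pi(s) to the exit zeta + 1 in direction eps.  If the jump range w_s reaches D,
   the tail bound P(W >= D) >= 2^(-(D+1)) for the symmetric walk W exits at once, however
   large w_s is; otherwise the maximal jump eps w_s, of probability 2^(-w_s), gains
   w_s >= w while the next drift costs at most 1.  Inducting over at most tau steps gives
   absorption probability at least 2^(-(zeta+1+tau)) >= 2^(-w tau), because
   zeta + 1 <= tau (w - 1).  By the Markov property P(H_t) <= (1 - 2^(-w tau))^(t / tau),
   which is at most (1 - 2^(-w tau))^(-1) sigma^t. *)

From Stdlib Require Import Reals ZArith List Lia Lra.
Open Scope R_scope.

Lemma sumL_nil {A} (f : A -> R) : sumL nil f = 0.
Proof. reflexivity. Qed.

Lemma sumL_cons {A} (a : A) (l : list A) f : sumL (a :: l) f = f a + sumL l f.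
Proof. reflexivity. Qed.

Lemma sumL_app {A} (l1 l2 : list A) f : sumL (l1 ++ l2) f = sumL l1 f + sumL l2 f.
Proof.
  induction l1 as [|a l1 IH]; cbn [app].
  - rewrite sumL_nil; ring.
  - rewrite !sumL_cons, IH; ring.
Qed.

Lemma sumL_map {A B} (h : A -> B) (l : list A) f :
  sumL (map h l) f = sumL l (fun x => f (h x)).
Proof.
  induction l as [|a l IH]; [reflexivity|].
  cbn [map]. rewrite !sumL_cons, IH; reflexivity.
Qed.

Lemma sumL_ext {A} (l : list A) (f g : A -> R) :
  (forall x, In x l -> f x = g x) -> sumL l f = sumL l g.
Proof.
  induction l as [|a l IH]; intros Hfg; [reflexivity|].
  rewrite !sumL_cons, IH, Hfg; [reflexivity | now left |].
  intros x Hx; apply Hfg; now right.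
Qed.

Lemma sumL_zero {A} (l : list A) : sumL l (fun _ => 0) = 0.
Proof. induction l as [|a l IH]; [reflexivity|]. rewrite sumL_cons, IH; ring. Qed.

Lemma sumL_add {A} (l : list A) f g : sumL l (fun x => f x + g x) = sumL l f + sumL l g.
Proof. induction l as [|a l IH]; [cbn; ring|]. rewrite !sumL_cons, IH; ring. Qed.

Lemma sumL_mull {A} (l : list A) c f : sumL l (fun x => c * f x) = c * sumL l f.
Proof. induction l as [|a l IH]; [cbn; ring|]. rewrite !sumL_cons, IH; ring. Qed.

Lemma sumL_divr {A} (l : list A) c f : sumL l (fun x => f x / c) = sumL l f / c.
Proof. unfold Rdiv. rewrite Rmult_comm, <- sumL_mull. apply sumL_ext; intros; ring. Qed.

Lemma sumL_comm {A B} (l1 : list A) (l2 : list B) (f : A -> B -> R) :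
  sumL l1 (fun a => sumL l2 (f a)) = sumL l2 (fun b => sumL l1 (fun a => f a b)).
Proof.
  induction l1 as [|a l1 IH].
  - symmetry; apply sumL_zero.
  - rewrite sumL_cons, IH, <- sumL_add. apply sumL_ext. intros; reflexivity.
Qed.

Lemma sumL_eqb (l : list Z) (y : Z) (f : Z -> R) : NoDup l ->
  sumL l (fun x => if Z.eqb x y then f x else 0) = if in_dec Z.eq_dec y l then f y else 0.
Proof.
  induction l as [|a l IH]; intros Hl; [reflexivity|].
  inversion_clear Hl as [|? ? Ha Hl']. rewrite sumL_cons, IH by exact Hl'.
  destruct (in_dec Z.eq_dec y (a :: l)) as [Hin|Hin], (in_dec Z.eq_dec y l);
    destruct (Z.eqb_spec a y); cbn in Hin; subst; intuition lra.
Qed.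

Lemma in_box_iff zeta s : in_box zeta s = true <-> (- Z.of_nat zeta <= s <= Z.of_nat zeta)%Z.
Proof. unfold in_box. rewrite Z.leb_le. lia. Qed.

Lemma in_box_false zeta s : in_box zeta s = false <-> (Z.of_nat zeta < Z.abs s)%Z.
Proof. unfold in_box. rewrite Z.leb_gt. reflexivity. Qed.

Lemma Zrange_In zeta s : In s (Zrange zeta) <-> in_box zeta s = true.
Proof.
  unfold Zrange. rewrite in_map_iff, in_box_iff. split.
  - intros [k [<- Hk]]. apply in_seq in Hk. lia.
  - intros Hs. exists (Z.to_nat (s + Z.of_nat zeta)). rewrite in_seq. lia.
Qed.

Lemma Zrange_NoDup zeta : NoDup (Zrange zeta).
Proof.
  apply NoDup_map_NoDup_ForallPairs; [|apply seq_NoDup].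
  intros x y _ _ Hxy. lia.
Qed.

Lemma sumL_Zrange_eqb zeta y (f : Z -> R) :
  sumL (Zrange zeta) (fun x => if Z.eqb x y then f x else 0) =
  if in_box zeta y then f y else 0.
Proof.
  rewrite sumL_eqb by apply Zrange_NoDup.
  destruct (in_dec Z.eq_dec y (Zrange zeta)) as [Hy|Hy]; rewrite Zrange_In in Hy.
  - now rewrite Hy.
  - now destruct (in_box zeta y).
Qed.

Lemma inv_pow2_le a b : (a <= b)%nat -> / 2 ^ b <= / 2 ^ a.
Proof.
  intros Hab. apply Rinv_le_contravar; [apply pow_lt; lra | apply Rle_pow; [lra | exact Hab]].
Qed.

Lemma inv_pow2_le_1 a : / 2 ^ a <= 1.
Proof. rewrite <- Rinv_1. apply (inv_pow2_le 0), Nat.le_0_l. Qed.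

(* [2 eta - n] with [eta ~ Bin(n, 1/2)] is a sum of [n] independent uniform signs;
   [walk_expect n g] is the expectation of [g] of that sum, revealing one sign at a time
   (see [walk_expect_binomial]). *)
Fixpoint walk_expect (n : nat) (g : Z -> R) : R :=
  match n with
  | O => g 0%Z
  | S n => (walk_expect n (fun x => g (x + 1)%Z) + walk_expect n (fun x => g (x - 1)%Z)) / 2
  end.

Lemma walk_expect_le n : forall g h : Z -> R,
  (forall x, g x <= h x) -> walk_expect n g <= walk_expect n h.
Proof.
  induction n as [|n IH]; intros g h Hgh; cbn [walk_expect]; [apply Hgh|].
  assert (walk_expect n (fun x => g (x + 1)%Z) <= walk_expect n (fun x => h (x + 1)%Z)) by auto.
  assert (walk_expect n (fun x => g (x - 1)%Z) <= walk_expect n (fun x => h (x - 1)%Z)) by auto.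
  lra.
Qed.

Lemma walk_expect_ext n (g h : Z -> R) :
  (forall x, g x = h x) -> walk_expect n g = walk_expect n h.
Proof. intros Hgh. apply Rle_antisym; apply walk_expect_le; intros x; rewrite Hgh; lra. Qed.

Lemma walk_expect_affine n : forall a c (g : Z -> R),
  walk_expect n (fun x => a * g x + c) = a * walk_expect n g + c.
Proof.
  induction n as [|n IH]; intros a c g; cbn [walk_expect]; [reflexivity|].
  rewrite !IH; field.
Qed.

Lemma walk_expect_const n c : walk_expect n (fun _ => c) = c.
Proof.
  rewrite (walk_expect_ext n _ (fun x => 0 * (fun _ => 0) x + c)) by (intros; ring).
  rewrite walk_expect_affine; ring.
Qed.

Lemma walk_expect_mull n c g : walk_expect n (fun x => c * g x) = c * walk_expect n g.
Proof.
  rewrite (walk_expect_ext n _ (fun x => c * g x + 0)) by (intros; ring).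
  rewrite walk_expect_affine; ring.
Qed.

Lemma walk_expect_sub n c g : walk_expect n (fun x => c - g x) = c - walk_expect n g.
Proof.
  rewrite (walk_expect_ext n _ (fun x => -1 * g x + c)) by (intros; ring).
  rewrite walk_expect_affine; ring.
Qed.

Lemma walk_expect_ge0 n g : (forall x, 0 <= g x) -> 0 <= walk_expect n g.
Proof. intros Hg. rewrite <- (walk_expect_const n 0). now apply walk_expect_le. Qed.

Lemma walk_expect_opp n : forall g, walk_expect n (fun x => g (- x)%Z) = walk_expect n g.
Proof.
  induction n as [|n IH]; intros g; cbn [walk_expect]; [reflexivity|].
  rewrite (walk_expect_ext n (fun x => g (- (x + 1))%Z) (fun x => g (- x - 1)%Z))
    by (intros; f_equal; lia).
  rewrite (walk_expect_ext n (fun x => g (- (x - 1))%Z) (fun x => g (- x + 1)%Z))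
    by (intros; f_equal; lia).
  rewrite (IH (fun x => g (x - 1)%Z)), (IH (fun x => g (x + 1)%Z)). lra.
Qed.

Lemma walk_expect_sign n eps g : (eps = 1 \/ eps = -1)%Z ->
  walk_expect n (fun x => g (eps * x)%Z) = walk_expect n g.
Proof.
  intros [-> | ->].
  - apply walk_expect_ext; intros x; now rewrite Z.mul_1_l.
  - rewrite <- walk_expect_opp. apply walk_expect_ext; intros x; f_equal; lia.
Qed.

Lemma walk_expect_top_lb n : forall g, (forall x, 0 <= g x) ->
  g (Z.of_nat n) / 2 ^ n <= walk_expect n g.
Proof.
  induction n as [|n IH]; intros g Hg; cbn [walk_expect].
  - cbn; lra.
  - assert (Hup := IH (fun x => g (x + 1)%Z) (fun x => Hg _)).
    assert (Hdown := walk_expect_ge0 n (fun x => g (x - 1)%Z) (fun x => Hg _)).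
    replace (Z.of_nat (S n)) with (Z.of_nat n + 1)%Z by lia.
    replace (g (Z.of_nat n + 1)%Z / 2 ^ S n) with (g (Z.of_nat n + 1)%Z / 2 ^ n / 2)
      by (cbn [pow]; field; apply pow_nonzero; lra).
    lra.
Qed.

Lemma walk_expect_top_sign_lb n eps g : (eps = 1 \/ eps = -1)%Z -> (forall x, 0 <= g x) ->
  g (eps * Z.of_nat n)%Z / 2 ^ n <= walk_expect n g.
Proof.
  intros Heps Hg. rewrite <- (walk_expect_sign n eps g Heps).
  exact (walk_expect_top_lb n (fun x => g (eps * x)%Z) (fun x => Hg _)).
Qed.

Lemma walk_expect_tail_lb n : forall a : nat, (a <= n)%nat ->
  / 2 ^ (a + 1) <= walk_expect n (fun x => if (Z.of_nat a <=? x)%Z then 1 else 0).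
Proof.
  induction n as [|n IH]; intros a Ha.
  - replace a with 0%nat by lia. cbn. lra.
  - destruct a as [|a].
    + (* by reflection symmetry, P(X >= 0) >= P(X <= 0) >= 1 - P(X >= 0) *)
      set (p := walk_expect (S n) (fun x => if (Z.of_nat 0 <=? x)%Z then 1 else 0)).
      assert (Hsym : 1 - p <= p).
      { unfold p at 1. rewrite <- walk_expect_opp, <- walk_expect_sub.
        apply walk_expect_le; intros x. cbn [Z.of_nat].
        destruct (Z.leb_spec 0 (- x)), (Z.leb_spec 0 x); lra || lia. }
      change (/ 2 ^ (0 + 1)) with (/ (2 * 1)). lra.
    + cbn [walk_expect].
      rewrite (walk_expect_ext n _ (fun x => if (Z.of_nat a <=? x)%Z then 1 else 0))
        by (intros x; destruct (Z.leb_spec (Z.of_nat (S a)) (x + 1)),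
            (Z.leb_spec (Z.of_nat a) x); lra || lia).
      assert (Hup := IH a ltac:(lia)).
      assert (Hdown := walk_expect_ge0 n
        (fun x => if (Z.of_nat (S a) <=? x - 1)%Z then 1 else 0)
        ltac:(intros x; cbv beta; destruct (Z.of_nat (S a) <=? x - 1)%Z; lra)).
      replace (/ 2 ^ (S a + 1)) with (/ 2 ^ (a + 1) / 2)
        by (cbn [plus pow]; field; apply pow_nonzero; lra).
      lra.
Qed.

Lemma walk_expect_tail_sign_lb n eps (a : nat) : (eps = 1 \/ eps = -1)%Z -> (a <= n)%nat ->
  / 2 ^ (a + 1) <= walk_expect n (fun x => if (Z.of_nat a <=? eps * x)%Z then 1 else 0).
Proof.
  intros Heps Ha.
  rewrite (walk_expect_sign n eps (fun y => if (Z.of_nat a <=? y)%Z then 1 else 0) Heps).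
  now apply walk_expect_tail_lb.
Qed.

Lemma binomial_0 n : Binomial.C n 0 = 1.
Proof. unfold Binomial.C. rewrite Nat.sub_0_r. cbn [fact INR]. field. apply INR_fact_neq_0. Qed.

Lemma binomial_diag n : Binomial.C n n = 1.
Proof. unfold Binomial.C. rewrite Nat.sub_diag. cbn [fact INR]. field. apply INR_fact_neq_0. Qed.

Lemma sumL_seq_first m (F : nat -> R) :
  sumL (seq 0 (S m)) F = F 0%nat + sumL (seq 0 m) (fun k => F (S k)).
Proof. cbn [seq]. rewrite sumL_cons, <- seq_shift, sumL_map. reflexivity. Qed.

Lemma sumL_seq_last m (F : nat -> R) :
  sumL (seq 0 (S m)) F = sumL (seq 0 m) F + F m.
Proof. rewrite seq_S, sumL_app. cbn. ring. Qed.

Lemma sumL_binomial_succ n (f : nat -> R) :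
  sumL (seq 0 (S (S n))) (fun j => Binomial.C (S n) j * f j) =
  sumL (seq 0 (S n)) (fun j => Binomial.C n j * f j) +
  sumL (seq 0 (S n)) (fun j => Binomial.C n j * f (S j)).
Proof.
  rewrite sumL_seq_first, sumL_seq_last, (sumL_seq_first n), (sumL_seq_last n).
  rewrite !binomial_0, !binomial_diag.
  rewrite (sumL_ext (seq 0 n) (fun k => Binomial.C (S n) (S k) * f (S k))
             (fun k => Binomial.C n k * f (S k) + Binomial.C n (S k) * f (S k))).
  - rewrite sumL_add. ring.
  - intros k Hk. apply in_seq in Hk. rewrite <- pascal by lia. ring.
Qed.

Lemma walk_expect_binomial n : forall g : Z -> R,
  sumL (seq 0 (S n)) (fun j => Binomial.C n j / 2 ^ n * g (2 * Z.of_nat j - Z.of_nat n)%Z) =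
  walk_expect n g.
Proof.
  induction n as [|n IH]; intros g.
  - cbn. rewrite binomial_0. field.
  - cbn [walk_expect]. rewrite <- !IH.
    rewrite (sumL_ext _ _
      (fun j => Binomial.C (S n) j * (g (2 * Z.of_nat j - Z.of_nat (S n))%Z / 2 ^ S n)))
      by (intros; unfold Rdiv; ring).
    rewrite sumL_binomial_succ, <- !sumL_add, <- sumL_divr.
    apply sumL_ext. intros j _.
    replace (2 * Z.of_nat (S j) - Z.of_nat (S n))%Z with (2 * Z.of_nat j - Z.of_nat n + 1)%Z by lia.
    replace (2 * Z.of_nat j - Z.of_nat (S n))%Z with (2 * Z.of_nat j - Z.of_nat n - 1)%Z by lia.
    cbn [pow]. field. apply pow_nonzero; lra.
Qed.

Section AbsorbingChain.

Variables (zeta : nat) (wk : Z -> nat) (pi : Z -> Z).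

Local Notation surv := (survival zeta wk pi).

Lemma sumL_trans_walk_expect s (h : Z -> R) :
  (forall y, in_box zeta y = false -> h y = 0) ->
  sumL (Zrange zeta) (fun s' => trans wk pi s s' * h s') =
  walk_expect (wk s) (fun x => h (s + pi s + x)%Z).
Proof.
  intros Hh. rewrite <- walk_expect_binomial, <- Nat.add_1_r. unfold trans.
  rewrite (sumL_ext (Zrange zeta) _ (fun s' => sumL (seq 0 (wk s + 1)) (fun j =>
     if Z.eqb s' (s + pi s + (2 * Z.of_nat j - Z.of_nat (wk s)))%Z
     then Binomial.C (wk s) j / 2 ^ wk s * h s' else 0))).
  - rewrite sumL_comm. apply sumL_ext. intros j _.
    rewrite sumL_Zrange_eqb.
    destruct (in_box zeta _) eqn:Hy; [reflexivity|]. rewrite Hh by exact Hy. ring.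
  - intros s' _. rewrite Rmult_comm, <- sumL_mull. apply sumL_ext. intros j _.
    replace (s + pi s + 2 * Z.of_nat j - Z.of_nat (wk s))%Z
      with (s + pi s + (2 * Z.of_nat j - Z.of_nat (wk s)))%Z by ring.
    destruct (Z.eqb _ _); ring.
Qed.

Lemma dist_outside_start s0 t s :
  in_box zeta s0 = false -> in_box zeta s = true -> dist zeta wk pi s0 t s = 0.
Proof.
  intros Hs0. revert s. induction t as [|t IH]; intros s Hs; cbn [dist].
  - destruct (Z.eqb_spec s s0); [congruence | reflexivity].
  - rewrite Hs, <- (sumL_zero (Zrange zeta)). apply sumL_ext. intros u Hu.
    rewrite IH by now apply Zrange_In. ring.
Qed.

Lemma survival_outside s t : in_box zeta s = false -> surv s t = 0.
Proof.
  intros Hs. unfold survival. rewrite <- (sumL_zero (Zrange zeta)). apply sumL_ext.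
  intros u Hu. apply dist_outside_start; [exact Hs | now apply Zrange_In].
Qed.

Lemma survival_0 s : in_box zeta s = true -> surv s 0 = 1.
Proof. intros Hs. unfold survival; cbn [dist]. now rewrite sumL_Zrange_eqb, Hs. Qed.

Lemma dist_succ s0 t s : dist zeta wk pi s0 (S t) s =
  if in_box zeta s
  then sumL (Zrange zeta) (fun u => dist zeta wk pi s0 t u * trans wk pi u s) else 0.
Proof. reflexivity. Qed.

Lemma dist_succ_start s0 j s : in_box zeta s0 = true ->
  dist zeta wk pi s0 (S j) s =
  sumL (Zrange zeta) (fun s' => trans wk pi s0 s' * dist zeta wk pi s' j s).
Proof.
  intros Hs0. revert s. induction j as [|j IH]; intros s.
  - cbn [dist].
    rewrite (sumL_ext _ _ (fun u => if Z.eqb u s0 then trans wk pi u s else 0))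
      by (intros u _; destruct (Z.eqb u s0); ring).
    rewrite (sumL_ext _ (fun s' => trans wk pi s0 s' * (if Z.eqb s s' then 1 else 0))
                        (fun s' => if Z.eqb s' s then trans wk pi s0 s' else 0))
      by (intros s' _; rewrite Z.eqb_sym; destruct (Z.eqb s' s); ring).
    now rewrite !sumL_Zrange_eqb, Hs0.
  - rewrite dist_succ.
    rewrite (sumL_ext _ (fun s' => trans wk pi s0 s' * dist zeta wk pi s' (S j) s)
      (fun s' => trans wk pi s0 s' * (if in_box zeta s then
        sumL (Zrange zeta) (fun u => dist zeta wk pi s' j u * trans wk pi u s) else 0)))
      by (intros; now rewrite dist_succ).
    destruct (in_box zeta s).
    + rewrite (sumL_ext _ _ (fun u => sumL (Zrange zeta) (fun s' =>
          trans wk pi s0 s' * dist zeta wk pi s' j u * trans wk pi u s)))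
        by (intros u _; rewrite IH, Rmult_comm, <- sumL_mull; apply sumL_ext; intros; ring).
      rewrite sumL_comm. apply sumL_ext; intros s' _.
      rewrite <- sumL_mull. apply sumL_ext; intros; ring.
    + rewrite (sumL_ext _ _ (fun _ => 0)), sumL_zero; [reflexivity | intros; ring].
Qed.

Lemma survival_succ s j : in_box zeta s = true ->
  surv s (S j) = walk_expect (wk s) (fun x => surv (s + pi s + x)%Z j).
Proof.
  intros Hs. rewrite <- (sumL_trans_walk_expect s (fun y => surv y j))
    by (intros; now apply survival_outside).
  unfold survival. rewrite (sumL_ext _ _ _ (fun x _ => dist_succ_start s j x Hs)), sumL_comm.
  apply sumL_ext; intros; apply sumL_mull.
Qed.

Lemma survival_bounds j : forall s, 0 <= surv s j <= 1.
Proof.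
  induction j as [|j IH]; intros s;
    (destruct (in_box zeta s) eqn:Hs; [|rewrite survival_outside by exact Hs; lra]).
  - rewrite survival_0 by exact Hs. lra.
  - rewrite survival_succ by exact Hs. split.
    + apply walk_expect_ge0. intros x; apply IH.
    + rewrite <- (walk_expect_const (wk s) 1). apply walk_expect_le. intros x; apply IH.
Qed.

Lemma survival_add_le s a b M : (forall u, surv u b <= M) -> surv s (a + b) <= M * surv s a.
Proof.
  intros HM. revert s. induction a as [|a IH]; intros s;
    (destruct (in_box zeta s) eqn:Hs; [|rewrite !survival_outside by exact Hs; lra]).
  - rewrite survival_0 by exact Hs. rewrite Rmult_1_r. apply HM.
  - rewrite plus_Sn_m, !survival_succ, <- walk_expect_mull by exact Hs.
    apply walk_expect_le. intros x; apply IH.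
Qed.

Lemma survival_le_pow tau theta : (forall u, surv u tau <= theta) ->
  forall t s, surv s t <= theta ^ (t / tau).
Proof.
  intros Htau.
  assert (Htheta : 0 <= theta)
    by (eapply Rle_trans; [apply (survival_bounds tau 0%Z) | apply Htau]).
  assert (Hblocks : forall m r s, surv s (m * tau + r) <= theta ^ m).
  { induction m as [|m IH]; intros r s; [apply survival_bounds|].
    replace (S m * tau + r)%nat with ((m * tau + r) + tau)%nat by lia.
    eapply Rle_trans; [now apply survival_add_le|]. cbn [pow].
    apply Rmult_le_compat_l; [exact Htheta | apply IH]. }
  intros t s. rewrite (Nat.div_mod_eq t tau) at 1. rewrite Nat.mul_comm. apply Hblocks.
Qed.

Lemma exit_next_step_lb s j eps (a : nat) :
  in_box zeta s = true -> (eps = 1 \/ eps = -1)%Z -> (a <= wk s)%nat ->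
  (Z.of_nat zeta + 1 <= Z.of_nat a + eps * (s + pi s))%Z ->
  / 2 ^ (a + 1) <= 1 - surv s (S j).
Proof.
  intros Hs Heps Ha Hexit.
  rewrite survival_succ, <- walk_expect_sub by exact Hs.
  eapply Rle_trans; [apply (walk_expect_tail_sign_lb _ eps a Heps Ha)|].
  apply walk_expect_le. intros x.
  destruct (Z.leb_spec (Z.of_nat a) (eps * x)) as [Hx|Hx].
  - rewrite survival_outside; [lra|].
    apply in_box_false. destruct Heps as [-> | ->]; lia.
  - pose proof (survival_bounds j (s + pi s + x)). lra.
Qed.

Lemma exit_after_max_jump_lb s j eps :
  in_box zeta s = true -> (eps = 1 \/ eps = -1)%Z ->
  (1 - surv (s + pi s + eps * Z.of_nat (wk s)) j) / 2 ^ wk s <= 1 - surv s (S j).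
Proof.
  intros Hs Heps. rewrite survival_succ, <- walk_expect_sub by exact Hs.
  apply (walk_expect_top_sign_lb _ eps (fun x => 1 - surv (s + pi s + x)%Z j) Heps).
  intros x. pose proof (survival_bounds j (s + pi s + x)). lra.
Qed.

Variable w : nat.
Hypothesis Hw : (1 <= w)%nat.
Hypothesis Hwk : forall k, (w <= wk k)%nat.
Hypothesis Hpi : forall k, (Z.abs (pi k) <= 1)%Z.

(* [D] bounds the distance from the drifted position [s + pi s] to the exit in direction
   [eps]; a maximal jump gains at least [w - 1] of it net of the following drift. *)
Lemma exit_within_lb eps : (eps = 1 \/ eps = -1)%Z ->
  forall j D s, (0 < j)%nat -> (D <= j * (w - 1) + 1)%nat ->
  (Z.of_nat zeta + 1 <= Z.of_nat D + eps * (s + pi s))%Z ->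
  / 2 ^ (D + j) <= 1 - surv s j.
Proof.
  intros Heps. induction j as [|j IH]; intros D s Hj HD Hdist; [lia|].
  destruct (in_box zeta s) eqn:Hs.
  2:{ rewrite survival_outside by exact Hs. rewrite Rminus_0_r. apply inv_pow2_le_1. }
  destruct (le_lt_dec D (wk s)) as [Hnear|Hfar].
  - eapply Rle_trans; [|apply (exit_next_step_lb s j eps D Hs Heps Hnear); lia].
    apply inv_pow2_le. lia.
  - assert (Hn := Hwk s).
    destruct j as [|j]; [lia|].
    set (n := wk s) in *.
    set (y := (s + pi s + eps * Z.of_nat n)%Z).
    eapply Rle_trans; [|apply (exit_after_max_jump_lb s (S j) eps Hs Heps)].
    fold n y.
    assert (IHy : / 2 ^ (D + 1 - n + S j) <= 1 - surv y (S j)).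
    { apply IH; [lia | nia |].
      pose proof (Hpi y) as Hy. unfold y in *. destruct Heps as [-> | ->]; lia. }
    replace (D + S (S j))%nat with ((D + 1 - n + S j) + n)%nat by lia.
    rewrite pow_add, Rinv_mult. unfold Rdiv.
    apply Rmult_le_compat_r; [left; apply Rinv_0_lt_compat, pow_lt; lra | exact IHy].
Qed.

Lemma exit_within_window j s : (zeta + 1 <= j * (w - 1))%nat ->
  / 2 ^ (zeta + 1 + j) <= 1 - surv s j.
Proof.
  intros Hj.
  set (eps := if (0 <=? s + pi s)%Z then 1%Z else (-1)%Z).
  apply (exit_within_lb eps); [| nia | lia |].
  - unfold eps. destruct (0 <=? s + pi s)%Z; auto.
  - unfold eps. destruct (Z.leb_spec 0 (s + pi s)); lia.
Qed.

End AbsorbingChain.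

Lemma pow_div_le_Rpower theta (tau t : nat) : 0 < theta <= 1 -> (0 < tau)%nat ->
  theta ^ (t / tau) * theta <= Rpower theta (/ INR tau) ^ t.
Proof.
  intros Htheta Htau. set (rho := Rpower theta (/ INR tau)).
  assert (Hrho0 : 0 < rho) by apply exp_pos.
  assert (Hrho1 : rho <= 1).
  { replace 1 with (Rpower 1 (/ INR tau)) by (unfold Rpower; now rewrite ln_1, Rmult_0_r, exp_0).
    apply Rle_Rpower_l; [left; apply Rinv_0_lt_compat, lt_0_INR | ]; lra || lia. }
  assert (Hrho_tau : rho ^ tau = theta).
  { unfold rho. rewrite <- Rpower_pow by apply exp_pos.
    rewrite Rpower_mult, Rinv_l by (apply not_0_INR; lia). apply Rpower_1; lra. }
  assert (Hr := Nat.mod_upper_bound t tau ltac:(lia)).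
  assert (Hrem : theta <= rho ^ (t mod tau)).
  { rewrite <- Hrho_tau. replace tau with (t mod tau + (tau - t mod tau))%nat at 1 by lia.
    rewrite pow_add.
    pose proof (pow_le rho (t mod tau) ltac:(lra)).
    assert (rho ^ (tau - t mod tau) <= 1)
      by (rewrite <- (pow1 (tau - t mod tau)); apply pow_incr; lra).
    nra. }
  rewrite (Nat.div_mod_eq t tau) at 2. rewrite pow_add, pow_mult, Hrho_tau.
  apply Rmult_le_compat_l; [apply pow_le; lra | exact Hrem].
Qed.

Lemma window_length zeta w : (1 < w)%nat ->
  (zeta + 1 <= (zeta / (w - 1) + 1) * (w - 1))%nat.
Proof.
  intros Hw. pose proof (Nat.mul_succ_div_gt zeta (w - 1) ltac:(lia)). nia.
Qed.

Theorem lemma4 (zeta : nat) (w : nat) (wk : Z -> nat) (pi : Z -> Z)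
  (Hzeta : (0 < zeta)%nat) (Hw : (1 < w)%nat)
  (Hwk : forall k : Z, (w <= wk k)%nat)
  (Hpi : forall k : Z, pi k = (-1)%Z \/ pi k = 0%Z \/ pi k = 1%Z) :
  let tau := (zeta / (w - 1) + 1)%nat in
  exists C : R, 0 < C /\
    forall (sigma : R),
      Rpower (1 - / 2 ^ (w * tau)) (/ INR tau) < sigma ->
      forall (t : nat) (s0 : Z),
        (- Z.of_nat zeta <= s0 <= Z.of_nat zeta)%Z ->
        survival zeta wk pi s0 t <= C * sigma ^ t.
Proof.
  intros tau.
  assert (Htau := window_length zeta w Hw). fold tau in Htau.
  assert (Hpi_abs : forall k, (Z.abs (pi k) <= 1)%Z)
    by (intros k; destruct (Hpi k) as [-> | [-> | ->]]; cbn; lia).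
  set (theta := 1 - / 2 ^ (w * tau)).
  assert (Htheta : 0 < theta <= 1).
  { assert (Hhalf := inv_pow2_le 1 (w * tau) ltac:(nia)). cbn [pow] in Hhalf.
    assert (0 < / 2 ^ (w * tau)) by (apply Rinv_0_lt_compat, pow_lt; lra).
    unfold theta; lra. }
  assert (Hwindow : forall u, survival zeta wk pi u tau <= theta).
  { intros u. pose proof (exit_within_window zeta wk pi w ltac:(lia) Hwk Hpi_abs tau u Htau).
    pose proof (inv_pow2_le (zeta + 1 + tau) (w * tau) ltac:(nia)). unfold theta; lra. }
  exists (/ theta). split; [apply Rinv_0_lt_compat; lra|].
  intros sigma Hsigma t s0 _.
  assert (Hrho : 0 <= Rpower theta (/ INR tau)) by (left; apply exp_pos).
  pose proof (pow_div_le_Rpower theta tau t Htheta ltac:(lia)) as Hdecay.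
  pose proof (pow_incr _ sigma t (conj Hrho (Rlt_le _ _ Hsigma))).
  eapply Rle_trans; [apply (survival_le_pow zeta wk pi tau theta Hwindow)|].
  apply (Rmult_le_reg_l theta); [lra|].
  rewrite <- Rmult_assoc, Rinv_r, Rmult_1_l by lra. lra.
Qed.
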